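(* Let $D$ be the commutative unital ring of diagonal $2\times2$ matrices with entries in $\mathbb{Z}/2\mathbb{Z}$, and let $B=\begin{pmatrix}1&0\\0&0\end{pmatrix}$, $C=\begin{pmatrix}0&0\\0&1\end{pmatrix}$. The irreducible $\lambda$-quiddities over $D$ are exactly, up to cyclic permutation: - $(\mathrm{Id},\mathrm{Id},\mathrm{Id})$; - $(B,C,B,C)$, $(B,0,B,0)$, $(C,0,C,0)$, $(0,0,0,0)$; - $(B,B,B,B,B,B)$ and $(C,C,C,C,C,C)$.
   Context: For $a_1,\ldots,a_n$ in a commutative unital ring $A$ (with unit $1$), $M_n(a_1,\ldots,a_n)=\begin{pmatrix}a_n&-1\\1&0\end{pmatrix}\cdots\begin{pmatrix}a_1&-1\\1&0\end{pmatrix}$ (a $2\times2$ matrix over $A$). An $n$-tuple $(a_1,\ldots,a_n)\in A^n$ is a $\lambda$-quiddity over $A$ if $M_n(a_1,\ldots,a_n)=\pm\mathrm{Id}$. For $(a_1,\ldots,a_n)\in A^n$, $(b_1,\ldots,b_m)\in A^m$, define $(a_1,\ldots,a_n)\oplus(b_1,\ldots,b_m)=(a_1+b_m,a_2,\ldots,a_{n-1},a_n+b_1,b_2,\ldots,b_{m-1})$. Write $(a_1,\ldots,a_n)\sim(b_1,\ldots,b_n)$ if $(b_1,\ldots,b_n)$ is obtained from $(a_1,\ldots,a_n)$ or from $(a_n,\ldots,a_1)$ by a cyclic permutation. A $\lambda$-quiddity $(c_1,\ldots,c_n)$ with $n\ge3$ is reducible if there exist a $\lambda$-quiddity $(b_1,\ldots,b_l)$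 and a tuple $(a_1,\ldots,a_m)$ with $l,m\ge3$ and $(c_1,\ldots,c_n)\sim(a_1,\ldots,a_m)\oplus(b_1,\ldots,b_l)$; it is irreducible otherwise (by convention $(0,0)$ is reducible). *)

From HB Require Import structures.
From mathcomp Require Import all_boot all_order all_algebra.
Set Implicit Arguments. Unset Strict Implicit. Unset Printing Implicit Defensive.
Import GRing.Theory.
Local Open Scope ring_scope.

Section Quiddity.
Variable A : comNzRingType.

Definition Mat1 (a : A) : 'M[A]_2 :=
  \matrix_(i < 2, j < 2)
    (if (i == 0 :> nat) && (j == 0 :> nat) then a
     else if (i == 0 :> nat) then -1
     else if (j == 0 :> nat) then 1 else 0).

(* M_n(a_1,...,a_n) = Mat1 a_n * ... * Mat1 a_1, for s = [:: a_1; ...; a_n] *)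
Definition Mq (s : seq A) : 'M[A]_2 := foldr (fun a M => M *m Mat1 a) 1%:M s.

Definition lambda_quiddity (s : seq A) : Prop := Mq s = 1%:M \/ Mq s = - 1%:M.

(* (a_1..a_n) (+) (b_1..b_m) = (a_1+b_m, a_2..a_{n-1}, a_n+b_1, b_2..b_{m-1}) *)
Definition qoplus (a b : seq A) : seq A :=
  let n := size a in let m := size b in
  (nth 0 a 0 + nth 0 b m.-1) :: take (n - 2) (drop 1 a)
    ++ (nth 0 a n.-1 + nth 0 b 0) :: take (m - 2) (drop 1 b).

Definition qequiv (a b : seq A) : Prop :=
  exists k, b = rot k a \/ b = rot k (rev a).

Definition reducible (c : seq A) : Prop :=
  (3 <= size c)%N /\
  exists (a b : seq A), lambda_quiddity b /\ (3 <= size b)%N /\ (3 <= size a)%N /\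
    qequiv c (qoplus a b).

Definition irreducible (c : seq A) : Prop :=
  lambda_quiddity c /\ (3 <= size c)%N /\ ~ reducible c.
End Quiddity.

(* D = diagonal 2x2 matrices over Z/2Z, represented by their diagonal:
   (x, y) stands for diag(x, y); ring operations are componentwise. *)
Definition D : comNzRingType := ('F_2 * 'F_2)%type.
Definition DId : D := (1, 1).
Definition DB : D := (1, 0).
Definition DC : D := (0, 1).
Definition D0 : D := (0, 0).

From mathcomp Require Import all_boot all_order all_algebra zify ring.
Import GRing.Theory.
Set Implicit Arguments. Unset Strict Implicit. Unset Printing Implicit Defensive.
Local Open Scope ring_scope.

(* Over any commutative ring A, the product M_n of a tuple is
   computed by a recursion on its four entries, so being a lambda-quiddity is
   a decidable property [quidb].  Unfolding the definition of (+), a tuple c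
   is reducible exactly when some cyclic block w of c (or of its reversal)
   with 1 <= |w| <= |c| - 3 can be framed as (x, w, y) into a
   lambda-quiddity; in one direction [reducible_of_window], in the other
   [window_of_reducible].  Hence, over a finite ring, irreducibility of a
   given tuple is decided by exhausting all blocks and frames.
   For the classification over D = F_2 x F_2 we use three reduction rules:
   (1,1,1) is a lambda-quiddity, so a tuple of length >= 4 containing 1 is
   reducible; in characteristic 2, (a,b,a,b) is a lambda-quiddity when
   ab = 0, so irreducible tuples of length >= 5 have no two consecutive
   entries with zero product, which in D forces them to be constant equal to
   B or C; and (d,...,d) of length 6 frames a block of length 4 of any longer
   constant tuple.  Lengths 3 and 4 are settled by exhaustive computation, as
   is the irreducibility of all rotations of the seven listed tuples. *)

Section Quiddities.
Variable A : comNzRingType.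

(* The entries (p, q, r, t) of M_n, listed row by row. *)
Fixpoint mq (s : seq A) : A * A * A * A :=
  if s is a :: s' then
    let: (p, q, r, t) := mq s' in (p * a + q, - p, r * a + t, - r)
  else (1, 0, 0, 1).

Definition coeff_mx (e : A * A * A * A) : 'M[A]_2 :=
  let: (p, q, r, t) := e in
  \matrix_(i < 2, j < 2)
    if i == 0 :> nat then (if j == 0 :> nat then p else q)
    else (if j == 0 :> nat then r else t).

Lemma coeff_mx_inj : injective coeff_mx.
Proof.
move=> [[[p q] r] t] [[[p' q'] r'] t'] E.
have entry i j := congr1 (fun M : 'M[A]_2 => M i j) E.
move: (entry ord0 ord0) (entry ord0 ord_max) (entry ord_max ord0).
by move: (entry ord_max ord_max); rewrite !mxE /= => -> -> -> ->.
Qed.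

Lemma Mq_coeffs (s : seq A) : Mq s = coeff_mx (mq s).
Proof.
elim: s => [|a s IH].
  apply/matrixP => i j; rewrite !mxE.
  by case: i => [[|[|//]] ?]; case: j => [[|[|//]] ?].
rewrite /Mq /= -/(Mq s) IH; case: (mq s) => [[[p q] r] t] /=.
apply/matrixP => i j; rewrite !mxE !big_ord_recl big_ord0 !mxE.
by case: i => [[|[|//]] ?]; case: j => [[|[|//]] ?] /=;
  rewrite ?mulr1 ?mulr0 ?addr0 ?mulrN1.
Qed.

Lemma scalar_coeffs (a : A) : a%:M = coeff_mx (a, 0, 0, a).
Proof.
apply/matrixP => i j; rewrite !mxE.
by case: i => [[|[|//]] ?]; case: j => [[|[|//]] ?].
Qed.

Definition quidb (s : seq A) : bool :=
  (mq s == (1, 0, 0, 1)) || (mq s == (-1, 0, 0, -1)).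

Lemma lambda_quiddityP (s : seq A) : lambda_quiddity s <-> quidb s.
Proof.
have opp_one : - 1%:M = coeff_mx (-1, 0, 0, -1).
  apply/matrixP => i j; rewrite !mxE.
  by case: i => [[|[|//]] ?]; case: j => [[|[|//]] ?]; rewrite /= ?oppr0.
rewrite /lambda_quiddity /quidb Mq_coeffs opp_one scalar_coeffs.
split=> [[] /coeff_mx_inj -> | /orP[] /eqP ->]; rewrite ?eqxx ?orbT //.
- by left.
- by right.
Qed.

Lemma quidb_111 : quidb [:: 1; 1; 1].
Proof. by apply/orP; right; apply/eqP; congr (_, _, _, _); ring. Qed.

Lemma quidb_abab (a b : A) : 2 = 0 :> A -> a * b = 0 -> quidb [:: a; b; a; b].
Proof.
move=> two0 ab0; apply/orP; left; apply/eqP => /=.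
(* each entry differs from the identity by an element of the ideal (ab, 2) *)
have ideal u v : u * (a * b) + v * 2 = 0 by rewrite ab0 two0 !mulr0 addr0.
congr (_, _, _, _); apply/eqP; rewrite -subr_eq0.
- by rewrite -[X in _ == X](ideal (a * b - 3) 0); apply/eqP; ring.
- by rewrite -[X in _ == X](ideal (- b) b); apply/eqP; ring.
- by rewrite -[X in _ == X](ideal a (- a)); apply/eqP; ring.
- by rewrite -[X in _ == X](ideal (-1) 0); apply/eqP; ring.
Qed.

Lemma framed (s : seq A) : (2 <= size s)%N ->
  exists s0 v s1, s = s0 :: v ++ [:: s1].
Proof.
case: s => [|s0 [|x s]] //= _.
by exists s0, (belast x s), (last x s); rewrite cats1 -lastI.
Qed.

Lemma qoplus_framed (a0 a1 b0 b1 : A) v w :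
  qoplus (a0 :: v ++ [:: a1]) (b0 :: w ++ [:: b1])
  = (a0 + b1) :: v ++ (a1 + b0) :: w.
Proof.
rewrite /qoplus /= !size_cat /= !addn1 !subSS !subn0 !drop0 /=.
by rewrite !nth_cat !ltnn !subnn /= !take_size_cat.
Qed.

Definition window (s : seq A) (j m : nat) : seq A := drop (size s - m) (rot j s).

(* A block of length between 1 and |c| - 3 framed into a lambda-quiddity b
   exhibits c as a rotation of a (+) b, where a carries the corrected ends. *)
Lemma reducible_of_window (c : seq A) j m x y :
  (0 < m)%N -> (m + 3 <= size c)%N ->
  quidb (x :: window c j m ++ [:: y]) -> reducible c.
Proof.
move=> m_gt0 mc qw.
pose u := take (size c - m) (rot j c).
have Erot : rot j c = u ++ window c j m by rewrite cat_take_drop.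
have su : size u = (size c - m)%N by rewrite size_takel // size_rot leq_subr.
have sw : size (window c j m) = m by rewrite size_drop size_rot; lia.
have [v0 [v [v1 Eu]]] : exists v0 v v1, u = v0 :: v ++ [:: v1].
  by apply: framed; rewrite su; lia.
have sv : size v = (size c - m - 2)%N by rewrite -su Eu /= size_cat /=; lia.
split; first lia.
exists ((v0 - y) :: v ++ [:: v1 - x]), (x :: window c j m ++ [:: y]).
split; first exact/lambda_quiddityP.
rewrite /= !size_cat /= sw sv; split; first lia; split; first lia.
by exists j; left; rewrite qoplus_framed !subrK Erot Eu /= -catA.
Qed.

Lemma window_of_reducible (c : seq A) : reducible c ->
  exists2 s, s = c \/ s = rev c & exists j m x y,
    [/\ (j < size c)%N, (0 < m)%N, (m + 3 <= size c)%N
      & quidb (x :: window s j m ++ [:: y])].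
Proof.
case=> _ [a [b [/lambda_quiddityP qb [b3 [a3 [k Ek]]]]]].
have [s Es Eab] : exists2 s, s = c \/ s = rev c & qoplus a b = rot k s.
  by case: Ek => E; [exists c; [left|] | exists (rev c); [right|]].
have ss : size s = size c by case: Es => ->; rewrite ?size_rev.
have [a0 [va [a1 Ea]]] := framed (ltnW a3).
have [b0 [wb [b1 Eb]]] := framed (ltnW b3).
have Erot : rot k s = ((a0 + b1) :: va ++ [:: a1 + b0]) ++ wb.
  by rewrite -Eab Ea Eb qoplus_framed /= -catA.
have sva : (1 <= size va)%N by move: a3; rewrite Ea /= size_cat /=; lia.
have swb : (1 <= size wb)%N by move: b3; rewrite Eb /= size_cat /=; lia.
have sc : size c = (size va + 2 + size wb)%N.
  by rewrite -ss -(size_rot k) Erot size_cat /= size_cat /=; lia.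
pose j := if (k < size s)%N then k else 0%N.
have Ej : rot j s = rot k s.
  by rewrite /j; case: ltnP => // ?; rewrite rot0 rot_oversize.
have Ew : window s j (size wb) = wb.
  rewrite /window Ej Erot ss sc (_ : (_ - _)%N = size ((a0 + b1) :: va ++ [:: a1 + b0])).
    by rewrite drop_size_cat.
  by rewrite /= size_cat /=; lia.
exists s => //; exists j, (size wb), b0, b1; split => //; try lia.
- by rewrite /j ss; case: ifP => [-> // | _]; lia.
- by rewrite Ew -Eb.
Qed.

Definition windowless (el s : seq A) : bool :=
  all (fun j => all (fun m => all (fun x => all (fun y =>
      ~~ quidb (x :: window s j m ++ [:: y])) el) el)
    (iota 1 (size s - 3))) (iota 0 (size s)).

Lemma not_reducible_of_windowless (el c : seq A) : (forall x, x \in el) ->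
  windowless el c -> windowless el (rev c) -> ~ reducible c.
Proof.
move=> el_full wc wr /window_of_reducible [s Es [j [m [x [y [jc m0 mc qw]]]]]].
have ss : size s = size c by case: Es => ->; rewrite ?size_rev.
have /allP ws : windowless el s by case: Es => ->.
have jin : j \in iota 0 (size s) by rewrite mem_iota ss.
have min : m \in iota 1 (size s - 3) by rewrite mem_iota ss; lia.
move: (ws j jin) => /allP/(_ m min)/allP/(_ x (el_full x))/allP/(_ y (el_full y)).
by rewrite qw.
Qed.

Lemma window_segment (c : seq A) i m : (i + m <= size c)%N ->
  window c (i + m) m = take m (drop i c).
Proof.
move=> imc; rewrite /window /rot drop_cat size_drop ifF; last lia.
by rewrite (_ : _ - _ = i)%N 1?addnC ?take_drop //; lia.
Qed.

Lemma reducible_of_segment (c : seq A) i m x y :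
  (0 < m)%N -> (i + m <= size c)%N -> (m + 3 <= size c)%N ->
  quidb (x :: take m (drop i c) ++ [:: y]) -> reducible c.
Proof. by move=> m_gt0 imc mc; rewrite -window_segment //; apply: reducible_of_window. Qed.

Lemma reducible_of_mem1 (c : seq A) : (4 <= size c)%N -> 1 \in c -> reducible c.
Proof.
move=> c4 c1; apply: (@reducible_of_segment c (index 1 c) 1 1 1) => //.
- by rewrite addn1 index_mem.
- by rewrite (drop_nth 0) ?index_mem // nth_index //= take0 quidb_111.
Qed.

Lemma reducible_of_zero_product (c : seq A) i : 2 = 0 :> A ->
  (5 <= size c)%N -> (i.+1 < size c)%N -> c`_i * c`_i.+1 = 0 -> reducible c.
Proof.
move=> two0 c5 ic zc; apply: (@reducible_of_segment c i 2 c`_i.+1 c`_i) => //; first by lia.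
rewrite (drop_nth 0) ?(ltnW ic) // (drop_nth 0) //= take0 /=.
by apply: quidb_abab; rewrite // mulrC.
Qed.

Lemma reducible_nseq (d : A) p n : (3 <= p)%N -> (p < n)%N ->
  quidb (nseq p d) -> reducible (nseq n d).
Proof.
move=> p3 pn qp; apply: (@reducible_of_segment _ 0 (p - 2) d d); rewrite ?size_nseq; try lia.
rewrite drop0 take_nseq; last lia.
rewrite -[[:: d]]/(nseq 1 d) -nseqD addn1 -[d :: _]/(nseq (p - 2).+2 d).
by rewrite (_ : (p - 2).+2 = p)%N //; lia.
Qed.

End Quiddities.

Definition Dl : seq D := [:: D0; DB; DC; DId].

Lemma mem_Dl (x : D) : x \in Dl.
Proof. by case: x => [[[|[|//]] ?] [[|[|//]] ?]]. Qed.

Lemma forall_D {P : pred D} : all P Dl -> forall x, P x.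
Proof. by move=> /allP P_Dl x; apply: P_Dl (mem_Dl x). Qed.

Lemma D_char2 : 2 = 0 :> D.
Proof. by apply/eqP. Qed.

Lemma D_nonzero_product (u v : D) : u != 1 -> v != 1 -> u * v != 0 ->
  u = v /\ (u = DB \/ u = DC).
Proof.
have all_pairs : all (fun u => all (fun v =>
    (u != 1) ==> (v != 1) ==> (u * v != 0) ==> (u == v) && ((u == DB) || (u == DC)))
  Dl) Dl by vm_compute.
move=> u1 v1 uv; move: (forall_D (forall_D all_pairs u) v).
by rewrite u1 v1 uv => /= /andP[/eqP <- /orP[] /eqP ->]; split => //; by [left | right].
Qed.

Definition irreducible_list : seq (seq D) :=
  [:: [:: DId; DId; DId]; [:: DB; DC; DB; DC]; [:: DB; D0; DB; D0];
      [:: DC; D0; DC; D0]; [:: D0; D0; D0; D0];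
      [:: DB; DB; DB; DB; DB; DB]; [:: DC; DC; DC; DC; DC; DC]].

Definition listed (c : seq D) : bool :=
  has (fun L => has (fun k => c == rot k L) (iota 0 (size L))) irreducible_list.

Lemma listedP (c : seq D) : listed c ->
  exists k, c = rot k [:: DId; DId; DId]
         \/ c = rot k [:: DB; DC; DB; DC]
         \/ c = rot k [:: DB; D0; DB; D0]
         \/ c = rot k [:: DC; D0; DC; D0]
         \/ c = rot k [:: D0; D0; D0; D0]
         \/ c = rot k [:: DB; DB; DB; DB; DB; DB]
         \/ c = rot k [:: DC; DC; DC; DC; DC; DC].
Proof.
case/hasP=> L; rewrite !inE => HL /hasP[k _ /eqP ->]; exists k.
by repeat case/orP: HL => [/eqP -> | HL]; do ?[by left | right]; move/eqP: HL ->.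
Qed.

(* Lengths 3 and 4, by exhaustion (in length 4 the entry 1 is excluded by
   [reducible_of_mem1]). *)
Lemma classify_size3 (x1 x2 x3 : D) :
  quidb [:: x1; x2; x3] -> listed [:: x1; x2; x3].
Proof.
have all3 : all (fun x1 => all (fun x2 => all (fun x3 =>
    quidb [:: x1; x2; x3] ==> listed [:: x1; x2; x3]) Dl) Dl) Dl by vm_compute.
exact/implyP/(forall_D (forall_D (forall_D all3 x1) x2) x3).
Qed.

Lemma classify_size4 (x1 x2 x3 x4 : D) : quidb [:: x1; x2; x3; x4] ->
  1 \notin [:: x1; x2; x3; x4] -> listed [:: x1; x2; x3; x4].
Proof.
have all4 : all (fun x1 => all (fun x2 => all (fun x3 => all (fun x4 =>
    quidb [:: x1; x2; x3; x4] ==> (1 \notin [:: x1; x2; x3; x4])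
    ==> listed [:: x1; x2; x3; x4]) Dl) Dl) Dl) Dl by vm_compute.
by move=> q n1; move: (forall_D (forall_D (forall_D (forall_D all4 x1) x2) x3) x4);
  rewrite q n1.
Qed.

Lemma D_constant (c : seq D) : (1 < size c)%N -> 1 \notin c ->
  (forall i, (i.+1 < size c)%N -> c`_i * c`_i.+1 != 0) ->
  exists2 d, d = DB \/ d = DC & c = nseq (size c) d.
Proof.
move=> c2 c1 nz.
have step i : (i.+1 < size c)%N -> c`_i = c`_i.+1 /\ (c`_i = DB \/ c`_i = DC).
  move=> ic; apply: D_nonzero_product (nz i ic).
  - by apply: contraNneq c1 => <-; rewrite mem_nth // ltnW.
  - by apply: contraNneq c1 => <-; rewrite mem_nth.
have const i : (i < size c)%N -> c`_i = c`_0.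
  by elim: i => [// | i IH] ic; rewrite -(step i ic).1 IH // ltnW.
exists c`_0; first exact: (step 0 c2).2.
apply: (eq_from_nth (x0 := 0)); first by rewrite size_nseq.
by move=> i ic; rewrite nth_nseq ic const.
Qed.

Lemma constant_quiddities (d : D) : d = DB \/ d = DC ->
  ~~ quidb (nseq 5 d) /\ quidb (nseq 6 d) /\ listed (nseq 6 d).
Proof. by case=> ->; vm_compute. Qed.

Lemma irreducible_listed (c : seq D) : irreducible c -> listed c.
Proof.
case=> /lambda_quiddityP qc [c3 irr].
have no1 : (4 <= size c)%N -> 1 \notin c.
  by move=> c4; apply/negP => /(reducible_of_mem1 c4).
have [c5 | c5] := ltnP (size c) 5.
  case: c qc c3 c5 no1 {irr} => [|x1 [|x2 [|x3 [|x4 [|? ?]]]]] //= qc _ _ no1.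
  - exact: classify_size3.
  - exact: classify_size4 (no1 isT).
have nz i : (i.+1 < size c)%N -> c`_i * c`_i.+1 != 0.
  by move=> ic; apply/eqP => /(reducible_of_zero_product D_char2 c5 ic).
have [d Bd Ec] := D_constant (ltn_trans (isT : 1 < 4)%N c5) (no1 (ltnW c5)) nz.
have [q5 [q6 l6]] := constant_quiddities Bd.
move: (size c) c5 Ec qc irr => n n5 -> qc irr.
have [n7 | n7] := ltnP n 7; last by case: irr; exact: reducible_nseq q6.
have [n_eq5 | ->] : n = 5%N \/ n = 6%N by lia.
- by rewrite n_eq5 (negbTE q5) in qc.
- exact: l6.
Qed.

Definition certified (L : seq D) : bool :=
  all (fun j => let s := rot j L in [&& quidb s, windowless Dl s & windowless Dl (rev s)])
    (iota 0 (size L)).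

Lemma irreducible_of_certified (L : seq D) k : (3 <= size L)%N -> certified L ->
  irreducible (rot k L).
Proof.
move=> L3 /allP cert.
wlog kL : k / (k < size L)%N => [wlog_kL | ].
  have [/wlog_kL // | kL] := ltnP k (size L).
  by rewrite rot_oversize // -(rot0 L); apply: wlog_kL; lia.
have kin : k \in iota 0 (size L) by rewrite mem_iota.
have /and3P[q w wr] := cert k kin.
split; first exact/lambda_quiddityP.
by rewrite size_rot; split => //; apply: not_reducible_of_windowless mem_Dl w wr.
Qed.

Lemma listed_irreducible (L : seq D) k : L \in irreducible_list -> irreducible (rot k L).
Proof.
have all_certified : all (fun L => (3 <= size L)%N && certified L) irreducible_list.
  by vm_compute.
by move=> /(allP all_certified)/andP[L3 cert]; apply: irreducible_of_certified.
Qed.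

Theorem proposition3p6 (c : seq D) :
  irreducible c <->
  exists k, c = rot k [:: DId; DId; DId]
         \/ c = rot k [:: DB; DC; DB; DC]
         \/ c = rot k [:: DB; D0; DB; D0]
         \/ c = rot k [:: DC; D0; DC; D0]
         \/ c = rot k [:: D0; D0; D0; D0]
         \/ c = rot k [:: DB; DB; DB; DB; DB; DB]
         \/ c = rot k [:: DC; DC; DC; DC; DC; DC].
Proof.
split; first by move/irreducible_listed/listedP.
case=> k E; suff [L HL ->] : exists2 L, L \in irreducible_list & c = rot k L.
  exact: listed_irreducible.
by case: E => [|[|[|[|[|[|]]]]]] ->; apply: (ex_intro2 _ _ _ _ (erefl _)).
Qed.
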